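(* For every integer $t\ge1$, $s(3t,3t,3t-2)=3$.
   Context: A placement delivery array $S$-PDA$(F,K,Z)$ is an $F\times K$ array $R=(r_{j,k})$, $1\le j\le F$, $1\le k\le K$, over a finite set $S$ such that: (1) each cell is either empty or contains an element of $S$; (2) each column contains exactly $Z$ empty cells; (3) each element of $S$ occurs at most once in each row and at most once in each column; (4) if two distinct nonempty cells satisfy $r_{j_1,k_1}=r_{j_2,k_2}=t\in S$, then the cells $r_{j_1,k_2}$ and $r_{j_2,k_1}$ are empty. For integers $F,K\ge1$, $0\le Z\le F$, define $s(F,K,Z)=\min\{|S| : \text{there exists an } S\text{-PDA}(F,K,Z)\}$. *)

From mathcomp Require Import all_boot.
Set Implicit Arguments. Unset Strict Implicit. Unset Printing Implicit Defensive.

(* A placement delivery array S-PDA(F,K,Z) over a symbol set S of size n,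
   where S is represented by 'I_n.  Cells: None = empty, Some s = symbol s.
   Rows indexed by 'I_F, columns by 'I_K. *)
Definition is_PDA (F K Z n : nat) (R : 'I_F -> 'I_K -> option 'I_n) : Prop :=
  (forall k : 'I_K, #|[set j : 'I_F | R j k == None]| = Z) /\
  (forall (j : 'I_F) (k1 k2 : 'I_K) (s : 'I_n),
      R j k1 = Some s -> R j k2 = Some s -> k1 = k2) /\
  (forall (j1 j2 : 'I_F) (k : 'I_K) (s : 'I_n),
      R j1 k = Some s -> R j2 k = Some s -> j1 = j2) /\
  (forall (j1 j2 : 'I_F) (k1 k2 : 'I_K) (s : 'I_n),
      (j1, k1) <> (j2, k2) -> R j1 k1 = Some s -> R j2 k2 = Some s ->
      R j1 k2 = None /\ R j2 k1 = None).

(* s(F,K,Z) = m : m is the minimum size of a symbol set admitting an S-PDA(F,K,Z) *)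
Definition pda_min (F K Z m : nat) : Prop :=
  (exists R : 'I_F -> 'I_K -> option 'I_m, is_PDA Z R) /\
  (forall (n : nat) (R : 'I_F -> 'I_K -> option 'I_n), is_PDA Z R -> m <= n).

(* The bound s >= 3: a square PDA with exactly two filled cells per column has
   two distinct symbols in every column.  With only two symbols a and b, each of
   them occurs in every column, hence (distinct rows per column) in every row.
   Take the column holding a at row x and b at row y, and the column where a
   sits in row y: condition (4) for these two occurrences of a empties the cell
   of row y in the first column, which holds b.

   The bound is attained by t diagonal copies of the 3 x 3 array with empty
   diagonal and entry (j + k) mod 3 off the diagonal. *)

From mathcomp Require Import all_boot.
From mathcomp Require Import zify.

Section TwoFilledCellsPerColumn.

Variables (F Z n : nat) (R : 'I_F -> 'I_F -> option 'I_n).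
Hypotheses (PDA_R : is_PDA Z R) (two_filled : Z + 2 = F).

Lemma card_filled_column k : #|[set j | R j k != None]| = 2.
Proof.
have [empty_col _] := PDA_R.
have := cardsC [set j | R j k == None]; rewrite empty_col card_ord.
have -> : ~: [set j | R j k == None] = [set j | R j k != None].
  by apply/setP => j; rewrite !inE.
lia.
Qed.

Lemma two_symbols_in_column k :
  exists x y a b, [/\ x != y, R x k = Some a, R y k = Some b & a != b].
Proof.
have [_ [_ [col_uniq _]]] := PDA_R.
have /eqP/cards2P [x [y [xy filled]]] := card_filled_column k.
have : x \in [set j | R j k != None] by rewrite filled !inE eqxx.
have : y \in [set j | R j k != None] by rewrite filled !inE eqxx orbT.
rewrite !inE; case Ry: (R y k) => [b|] //; case Rx: (R x k) => [a|] // _ _.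
exists x, y, a, b; split => //; apply: contra xy => /eqP ab.
by rewrite (col_uniq x y k a) // ab.
Qed.

Lemma symbols_in_every_column :
  n <= 2 -> forall s k, exists j, R j k = Some s.
Proof.
move=> n_le2 s k.
have [x [y [a [b [_ Rx Ry /eqP ab]]]]] := two_symbols_in_column k.
have : (s : nat) = a \/ (s : nat) = b.
  have := ltn_ord s; have := ltn_ord a; have := ltn_ord b.
  have : (a : nat) <> b by move=> /val_inj.
  lia.
by case=> /val_inj ->; [exists x | exists y].
Qed.

Lemma symbol_in_every_row s :
  (forall k, exists j, R j k = Some s) -> forall j, exists k, R j k = Some s.
Proof.
have [_ [row_uniq _]] := PDA_R.
move=> in_cols j.
have rowP k : exists j, R j k == Some s.
  by have [i Ri] := in_cols k; exists i; rewrite Ri.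
pose row_of k := xchoose (rowP k).
have R_row k : R (row_of k) k = Some s by apply/eqP; exact: (xchooseP (rowP k)).
have row_inj : injective row_of.
  by move=> k1 k2 E; apply: (row_uniq (row_of k1) k1 k2 s) => //; rewrite E.
have [col_of _ row_colK] := injF_bij row_inj.
by exists (col_of j); rewrite -{1}(row_colK j).
Qed.

Lemma three_le_symbols : 3 <= n.
Proof.
have [_ [_ [_ cross]]] := PDA_R.
rewrite leqNgt; apply/negP => n_lt3.
have F_gt0 : 0 < F by lia.
have [x [y [a [b [xy Rx Ry _]]]]] := two_symbols_in_column (Ordinal F_gt0).
have [k Ryk] := @symbol_in_every_row a (symbols_in_every_column n_lt3 a) y.
have neq : (x, Ordinal F_gt0) <> (y, k) by case=> /eqP; rewrite (negbTE xy).
by have [_] := cross _ _ _ _ _ neq Rx Ryk; rewrite Ry.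
Qed.

End TwoFilledCellsPerColumn.

Definition block_pda t (j k : 'I_(3 * t)) : option 'I_3 :=
  if (j %/ 3 == k %/ 3) && (j != k) then Some (inord ((j %% 3 + k %% 3) %% 3))
  else None.

Lemma block_pda_Some t j k s : block_pda t j k = Some s ->
  [/\ j %/ 3 = k %/ 3, (j : nat) <> k & (s : nat) = (j %% 3 + k %% 3) %% 3].
Proof.
rewrite /block_pda; case: ifP => // /andP [/eqP same_block /eqP jk] [<-].
by rewrite inordK ?ltn_pmod //; split=> // /val_inj.
Qed.

Lemma block_pda_None t (j k : 'I_(3 * t)) :
  j %/ 3 <> k %/ 3 \/ (j : nat) = k -> block_pda t j k = None.
Proof.
move=> H; rewrite /block_pda; case: ifP => // /andP [/eqP same_block /eqP jk].
by case: H => // /val_inj.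
Qed.

Lemma card_block_neighbours t (k : 'I_(3 * t)) :
  #|[set j : 'I_(3 * t) | (j %/ 3 == k %/ 3) && (j != k)]| = 2.
Proof.
have k_lt := ltn_ord k.
have x_lt : 3 * (k %/ 3) + (k %% 3 + 1) %% 3 < 3 * t by lia.
have y_lt : 3 * (k %/ 3) + (k %% 3 + 2) %% 3 < 3 * t by lia.
apply/eqP/cards2P; exists (Ordinal x_lt), (Ordinal y_lt); split.
  by apply/eqP => /(congr1 val) /=; lia.
apply/setP => j; rewrite !inE -!(inj_eq val_inj) /=.
have := ltn_ord j; lia.
Qed.

Lemma block_pda_is_PDA t : 0 < t -> is_PDA (3 * t - 2) (block_pda t).
Proof.
move=> t_gt0; split; [|split; [|split]].
- move=> k.
  have -> : [set j | block_pda t j k == None] =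
            ~: [set j : 'I_(3 * t) | (j %/ 3 == k %/ 3) && (j != k)].
    by apply/setP => j; rewrite !inE /block_pda; case: ifP.
  by have := cardsC [set j : 'I_(3 * t) | (j %/ 3 == k %/ 3) && (j != k)];
     rewrite card_ord card_block_neighbours; lia.
- move=> j k1 k2 s /block_pda_Some [? ? ?] /block_pda_Some [? ? ?].
  apply: ord_inj; lia.
- move=> j1 j2 k s /block_pda_Some [? ? ?] /block_pda_Some [? ? ?].
  apply: ord_inj; lia.
- move=> j1 j2 k1 k2 s neq /block_pda_Some [? ? ?] /block_pda_Some [? ? ?].
  have : ~ ((j1 : nat) = j2 /\ (k1 : nat) = k2).
    by case=> /val_inj E1 /val_inj E2; apply: neq; rewrite E1 E2.
  by split; apply: block_pda_None; lia.
Qed.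

Theorem mainTheorem18 (t : nat) : 1 <= t -> pda_min (3 * t) (3 * t) (3 * t - 2) 3.
Proof.
move=> t_gt0; split; first by exists (block_pda t); apply: block_pda_is_PDA.
move=> n R PDA_R; apply: three_le_symbols PDA_R _; lia.
Qed.
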